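(* Let $n,m$ be positive integers, let $\mathbf{A}_c\in\mathbb{Z}^{m\times 2n}$ and $\mathbf{b}_c\in\mathbb{Z}^{m}$, and let $c[\bar x,\bar x']$ be the linear constraint $\mathbf{A}_c\langle \mathbf{x},\mathbf{x}'\rangle\ge \mathbf{b}_c$ in the $2n$ variables $\bar x=(x_1,\dots,x_n)$, $\bar x'=(x'_1,\dots,x'_n)$. Assume $c$ is satisfiable over $\mathbb{Q}_+^{2n}$. Consider the binary $\mathrm{CLP}(\mathbb{Q}_+)$ clause $C$: $p(\bar x)\mathrel{:-} c[\bar x,\bar x'],\,p(\bar x')$, where $p$ is an $n$-ary predicate. Define $$\mathrm{plrf}(C)=\Bigl\{\boldsymbol\mu\in\mathbb{Q}_+^n \;\Bigm|\; \forall \bar x,\bar x'\in\mathbb{Q}_+^n:\ c[\bar x,\bar x']\implies \sum_{i=1}^n\mu_i x_i-\sum_{i=1}^n \mu_i x'_i\ge 1\Bigr\}$$ and let $\mathrm{svg}(C)$ be the set of all $\boldsymbol\mu\in\mathbb{Q}_+^n$ for which there exists $\mathbf{y}\in\mathbb{Q}^m$ such that $\langle\mathbf{y},\boldsymbol\mu\rangle$ satisfies the system $$\begin{pmatrix}\mathbf{A}_c^{\mathrm T} & \begin{matrix}-\mathbf{I}_n\\ \mathbf{I}_n\end{matrix}\\ -\mathbf{b}_c^{\mathrm T} & \mathbf{0}\end{pmatrix}\langle\mathbf{y},\boldsymbol\mu\rangle\le\begin{pmatrix}\mathbf{0}\\-1\end{pmatrix},\qquad \langle\mathbf{y},\boldsymbol\mu\rangle\ge\mathbf{0},$$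 i.e. $\mathbf{y}\ge \mathbf 0$, $\mathbf{A}_c^{\mathrm T}\mathbf{y}\le\langle\boldsymbol\mu,-\boldsymbol\mu\rangle$ componentwise, and $\mathbf{b}_c^{\mathrm T}\mathbf{y}\ge 1$. Then $\mathrm{plrf}(C)=\mathrm{svg}(C)$.
   Context: $\mathbb{Q}_+$ denotes the nonnegative rationals. For vectors $\mathbf v\in\mathbb{Q}^a,\mathbf w\in\mathbb{Q}^b$, $\langle\mathbf v,\mathbf w\rangle\in\mathbb{Q}^{a+b}$ denotes their concatenation (as a column vector); vector inequalities are componentwise; $\mathbf{I}_n$ is the $n\times n$ identity matrix and $\mathbf 0$ a zero matrix/vector of appropriate size. The constraint $c[\bar x,\bar x']$ is identified with the vector inequality $\mathbf{A}_c\langle\mathbf x,\mathbf x'\rangle\ge\mathbf b_c$ where $\mathbf x=\langle x_1,\dots,x_n\rangle$, $\mathbf x'=\langle x'_1,\dots,x'_n\rangle$. *)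

From mathcomp Require Import all_boot all_order all_algebra.
Set Implicit Arguments. Unset Strict Implicit. Unset Printing Implicit Defensive.
Import Order.TTheory GRing.Theory Num.Theory.
Local Open Scope ring_scope.

Definition cv_le (k : nat) (u v : 'cV[rat]_k) : Prop := forall i, u i 0 <= v i 0.

Definition ratM (p q : nat) (M : 'M[int]_(p, q)) : 'M[rat]_(p, q) :=
  map_mx (fun z : int => z%:~R) M.

Definition sat_c (n m : nat) (A : 'M[int]_(m, n + n)) (b : 'cV[int]_m)
  (x x' : 'cV[rat]_n) : Prop :=
  cv_le (ratM b) (ratM A *m col_mx x x').

Definition plrf (n m : nat) (A : 'M[int]_(m, n + n)) (b : 'cV[int]_m)
  (mu : 'cV[rat]_n) : Prop :=
  cv_le 0 mu /\
  forall x x' : 'cV[rat]_n, cv_le 0 x -> cv_le 0 x' -> sat_c A b x x' ->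
    \sum_(i < n) mu i 0 * x i 0 - \sum_(i < n) mu i 0 * x' i 0 >= 1.

Definition svg (n m : nat) (A : 'M[int]_(m, n + n)) (b : 'cV[int]_m)
  (mu : 'cV[rat]_n) : Prop :=
  cv_le 0 mu /\
  exists y : 'cV[rat]_m,
    cv_le 0 y /\
    cv_le ((ratM A)^T *m y) (col_mx mu (- mu)) /\
    1 <= ((ratM b)^T *m y) 0 0.

From mathcomp Require Import all_boot all_order all_algebra.
From mathcomp Require Import lra.
Set Implicit Arguments. Unset Strict Implicit. Unset Printing Implicit Defensive.
Import Order.TTheory GRing.Theory Num.Theory.
Local Open Scope ring_scope.

(* The inclusion svg(C) <= plrf(C) is weak LP duality. Conversely, if mu is in
   plrf(C) then the system [A <x, x'> >= b, <x, x'> >= 0, mu.x - mu.x' < 1]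
   has no solution. Motzkin's transposition theorem, proved by Fourier-Motzkin
   elimination that keeps track of strict rows, turns this into a nonnegative
   combination of the rows that is contradictory. Since the system without
   the strict row is satisfiable, that row has positive weight; normalizing
   it to 1 leaves weights y on the rows of A with A^T y <= <mu, -mu> and
   b^T y >= 1. *)

Section Motzkin.
Variable R : realFieldType.

Definition dot (T : finType) (u v : T -> R) : R := \sum_i u i * v i.

Lemma dot_ge0 (T : finType) (u v : T -> R) :
  (forall i, 0 <= u i) -> (forall i, 0 <= v i) -> 0 <= dot u v.
Proof. by move=> u0 v0; apply: sumr_ge0 => i _; apply: mulr_ge0. Qed.

Lemma dot_delta (T : finType) (i : T) (v : T -> R) :
  dot (fun k => (k == i)%:R) v = v i.
Proof.
rewrite /dot (bigD1 i) //= eqxx mul1r big1 ?addr0 // => k /negbTE->.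
exact: mul0r.
Qed.

Lemma dot_exchange (S T : finType) (y : S -> R) (w : S -> T -> R) (v : T -> R) :
  dot (fun t => dot y (w^~ t)) v = dot y (fun s => dot (w s) v).
Proof.
rewrite /dot; under eq_bigr do rewrite mulr_suml.
rewrite exchange_big; apply: eq_bigr => s _; rewrite mulr_sumr.
by apply: eq_bigr => t _; rewrite mulrA.
Qed.

Definition solves p (I : finType) (a : I -> 'I_p -> R) (d : I -> R)
    (c : I -> bool) (z : 'I_p -> R) :=
  forall i, d i < dot (a i) z ?<= if c i.

(* The combination [y] of the rows cancels every variable, so a solution would
   give [dot y d <= 0], strictly if some strict row has positive weight. *)
Definition certificate p (I : finType) (a : I -> 'I_p -> R) (d : I -> R)
    (c : I -> bool) (y : I -> R) :=
  [/\ forall i, 0 <= y i, forall k, dot y (a^~ k) = 0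
    & 0 < dot y d ?<= if [exists i, (0 < y i) && ~~ c i]].

Lemma certificate_dim0 (I : finType) (a : I -> 'I_0 -> R) d c :
  ~ (exists z, solves a d c z) -> exists y, certificate a d c y.
Proof.
move=> nosol.
have /forallPn [i] : ~~ [forall i, d i < dot (a i) (fun=> 0) ?<= if c i].
  by apply/forallP => sol; apply: nosol; exists (fun=> 0) => i; apply: sol.
rewrite [dot _ _]big_ord0 -lteifNE => di.
exists (fun k => (k == i)%:R); split => [k||]; first by rewrite ler0n.
- by case.
have -> : [exists k, (0 < (k == i)%:R :> R) && ~~ c k] = ~~ c i.
  apply/existsP/idP => [[k]|nci]; last by exists i; rewrite eqxx ltr01.
  by case: eqP => [->|_] /andP[]; rewrite ?ltxx.
by rewrite dot_delta.
Qed.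

Lemma separating_point (I : finType) (Lo Up : pred I) (L U : I -> R)
    (c : I -> bool) :
  (forall i j, Lo i -> Up j -> L i < U j ?<= if c i && c j) ->
  exists t, (forall i, Lo i -> L i < t ?<= if c i) /\
            (forall j, Up j -> t < U j ?<= if c j).
Proof.
move=> LU.
case: (pickP Lo) => [i0 Li0|noL]; case: (pickP Up) => [j0 Uj0|noU].
- case: (arg_maxP L Li0) => im Lim maxL; case: (arg_minP U Uj0) => jm Ujm minU.
  have LUm := lteifW (LU _ _ Lim Ujm).
  exists ((L im + U jm) / 2); split => [i Li|j Uj].
  + have := maxL i Li; have := LU _ _ Li Ujm.
    by case: (c i); case: (c jm) => /= h1 h2; lra.
  + have := minU j Uj; have := LU _ _ Lim Uj.
    by case: (c j); case: (c im) => /= h1 h2; lra.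
- case: (arg_maxP L Li0) => im _ maxL.
  exists (L im + 1); split => [i Li|j]; last by rewrite noU.
  by apply: lteifS; have := maxL i Li => /= h; lra.
- case: (arg_minP U Uj0) => jm _ minU.
  exists (U jm - 1); split => [i|j Uj]; first by rewrite noL.
  by apply: lteifS; have := minU j Uj => /= h; lra.
- by exists 0; split => i; rewrite ?noL ?noU.
Qed.

Lemma pair_bound C (ai aj di dj li lj : R) : 0 < ai -> aj < 0 ->
  - aj * di + ai * dj < - aj * li + ai * lj ?<= if C ->
  (di - li) / ai < (dj - lj) / aj ?<= if C.
Proof.
move=> ai0 aj0; rewrite lteif_ndivlMr // mulrAC lteif_pdivlMr //.
by case: C => /= h; nra.
Qed.

(* Fourier-Motzkin elimination of the variable [ord0]: each row with positive
   and each row with negative coefficient in [ord0] are combined so as to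
   cancel it, and the rows without [ord0] are kept. *)
Section Elimination.
Variables (p : nat) (I : finType) (a : I -> 'I_p.+1 -> R).
Variables (d : I -> R) (c : I -> bool).

Definition fm_weight (J : (I * I) + I) (k : I) : R :=
  match J with
  | inl (i, j) => if (0 < a i ord0) && (a j ord0 < 0)
                  then - a j ord0 * (k == i)%:R + a i ord0 * (k == j)%:R else 0
  | inr i => if a i ord0 == 0 then (k == i)%:R else 0
  end.

Definition fm_coef J (k : 'I_p) := dot (fm_weight J) (fun i => a i (lift ord0 k)).
Definition fm_rhs J := dot (fm_weight J) d.
Definition fm_nonstrict J := [forall i, (0 < fm_weight J i) ==> c i].

Lemma fm_weight_ge0 J k : 0 <= fm_weight J k.
Proof.
case: J => [[i j]|i] /=; case: ifP => // /andP[ai aj].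
by apply: addr_ge0; apply: mulr_ge0; rewrite ?ler0n ?oppr_ge0 ?ltW.
Qed.

Lemma dot_fm_weight_pair i j v : 0 < a i ord0 -> a j ord0 < 0 ->
  dot (fm_weight (inl (i, j))) v = - a j ord0 * v i + a i ord0 * v j.
Proof.
move=> ai aj; rewrite /dot /= ai aj /=.
under eq_bigr do rewrite mulrDl -!mulrA.
by rewrite big_split /= -!mulr_sumr -!/(dot _ v) !dot_delta.
Qed.

Lemma dot_fm_weight_keep i v : a i ord0 = 0 -> dot (fm_weight (inr i)) v = v i.
Proof. by move=> ai; rewrite /dot /= ai eqxx -/(dot _ v) dot_delta. Qed.

Lemma fm_coef_eliminated J : dot (fm_weight J) (fun i => a i ord0) = 0.
Proof.
case: J => [[i j]|i].
  have [/andP[ai aj]|invalid] := boolP ((0 < a i ord0) && (a j ord0 < 0)).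
    by rewrite dot_fm_weight_pair //; lra.
  by rewrite /dot big1 // => k _; rewrite /= (negbTE invalid) mul0r.
have [ai|ai] := eqVneq (a i ord0) 0; first by rewrite dot_fm_weight_keep.
by rewrite /dot big1 // => k _; rewrite /= (negbTE ai) mul0r.
Qed.

Lemma fm_nonstrictW J i : fm_nonstrict J -> 0 < fm_weight J i -> c i.
Proof. by move/forallP/(_ i)/implyP. Qed.

Lemma fm_infeasible :
  ~ (exists z, solves a d c z) ->
  ~ (exists z, solves fm_coef fm_rhs fm_nonstrict z).
Proof.
move=> nosol [z' sol'].
pose l i := dot (fun k => a i (lift ord0 k)) z'.
have proj J : fm_rhs J < dot (fm_weight J) l ?<= if fm_nonstrict J.
  by rewrite -dot_exchange; apply: sol'.
pose bound i := (d i - l i) / a i ord0.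
have [|t [lower upper]] := @separating_point _ (fun i => 0 < a i ord0)
    (fun j => a j ord0 < 0) bound bound c.
  move=> i j /= ai aj; apply: pair_bound => //.
  have := proj (inl (i, j)); rewrite /fm_rhs !dot_fm_weight_pair //.
  apply: lteif_imply; apply/implyP => ns.
  have wi : 0 < fm_weight (inl (i, j)) i.
    rewrite /= ai aj /= eqxx mulr1n mulr1.
    have := mulr_ge0 (ltW ai) (ler0n R (i == j)); lra.
  have wj : 0 < fm_weight (inl (i, j)) j.
    rewrite /= ai aj /= eqxx mulr1n mulr1.
    have : 0 <= - a j ord0 * (j == i)%:R.
      by apply: mulr_ge0; [rewrite oppr_ge0; exact: ltW | exact: ler0n].
    lra.
  by rewrite (fm_nonstrictW ns wi) (fm_nonstrictW ns wj).
apply: nosol; exists (fun k => if unlift ord0 k is Some k' then z' k' else t).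
move=> i; rewrite /dot big_ord_recl unlift_none.
under eq_bigr do rewrite liftK.
rewrite -/(dot _ _) -/(l i).
case: (ltrgt0P (a i ord0)) => ai.
- have := lower i ai; rewrite /bound lteif_pdivrMr // lteifBlDr.
  by rewrite mulrC.
- have := upper i ai; rewrite /bound lteif_ndivlMr // lteifBlDr.
  by rewrite mulrC.
- have := proj (inr i); rewrite /fm_rhs !dot_fm_weight_keep // ai mul0r add0r.
  apply: lteif_imply; apply/implyP => /fm_nonstrictW; apply.
  by rewrite /= ai !eqxx ltr01.
Qed.

Lemma fm_certificate y : certificate fm_coef fm_rhs fm_nonstrict y ->
  certificate a d c (fun i => dot y (fm_weight^~ i)).
Proof.
case=> y0 ya yd; split.
- by move=> i; apply: dot_ge0 => // J; apply: fm_weight_ge0.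
- move=> k; rewrite dot_exchange.
  case: (unliftP ord0 k) => [k'|] ->; first exact: ya.
  by rewrite [dot y _]/dot big1 // => J _; rewrite fm_coef_eliminated mulr0.
rewrite dot_exchange; apply: lteif_imply yd; apply/implyP.
case/existsP => J /andP[yJ /forallPn[i]]; rewrite negb_imply => /andP[wi ci].
apply/existsP; exists i; rewrite ci andbT.
apply: (lt_le_trans (mulr_gt0 yJ wi)); rewrite /dot (bigD1 J) //= lerDl.
by apply: sumr_ge0 => K _; apply: mulr_ge0 => //; apply: fm_weight_ge0.
Qed.

End Elimination.

Theorem motzkin_transposition p (I : finType) (a : I -> 'I_p -> R) d c :
  ~ (exists z, solves a d c z) -> exists y, certificate a d c y.
Proof.
elim: p I a d c => [|p IH] I a d c nosol; first exact: certificate_dim0.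
have [y cert] := IH _ _ _ _ (fm_infeasible nosol).
by eexists; apply: fm_certificate cert.
Qed.

End Motzkin.

Section AffineFarkas.
Variable R : realFieldType.

Lemma dotmxC k (u v : 'cV[R]_k) : (u^T *m v) 0 0 = (v^T *m u) 0 0.
Proof. by rewrite !mxE; apply: eq_bigr => i _; rewrite !mxE mulrC. Qed.

Lemma dotmx_le k (u v y : 'cV[R]_k) : (forall i, 0 <= y i 0) ->
  (forall i, u i 0 <= v i 0) -> (u^T *m y) 0 0 <= (v^T *m y) 0 0.
Proof.
by move=> y0 uv; rewrite !mxE; apply: ler_sum => i _; rewrite !mxE ler_wpM2r.
Qed.

Lemma weak_duality k q (M : 'M[R]_(k, q)) (d y : 'cV[R]_k) (c w : 'cV[R]_q) :
  (forall i, 0 <= y i 0) -> (forall j, 0 <= w j 0) ->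
  (forall i, d i 0 <= (M *m w) i 0) -> (forall j, (M^T *m y) j 0 <= c j 0) ->
  (d^T *m y) 0 0 <= (c^T *m w) 0 0.
Proof.
move=> y0 w0 dMw Myc; apply: le_trans (dotmx_le y0 dMw) _.
by rewrite trmx_mul -mulmxA [leLHS]dotmxC; apply: dotmx_le.
Qed.

Lemma affine_farkas k q (M : 'M[R]_(k, q)) (d : 'cV[R]_k) (c : 'cV[R]_q) delta :
  (exists w : 'cV[R]_q, forall i, d i 0 <= (M *m w) i 0) ->
  (forall w : 'cV[R]_q,
     (forall i, d i 0 <= (M *m w) i 0) -> delta <= (c^T *m w) 0 0) ->
  exists2 y : 'cV[R]_k,
    (forall i, 0 <= y i 0) & M^T *m y = c /\ delta <= (d^T *m y) 0 0.
Proof.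
move=> [w0 feasible] bound.
pose a (J : 'I_k + 'I_1) j := if J is inl i then M i j else - c j 0.
pose rhs (J : 'I_k + 'I_1) := if J is inl i then d i 0 else - delta.
pose nonstrict (J : 'I_k + 'I_1) := if J is inl _ then true else false.
have [|y [y0 ya yd]] :=
    motzkin_transposition (a := a) (d := rhs) (c := nonstrict).
  move=> [z sol]; pose w := \col_j z j.
  have Mw i : (M *m w) i 0 = dot (a (inl i)) z.
    by rewrite mxE; apply: eq_bigr => j _; rewrite mxE.
  have cw : (c^T *m w) 0 0 = - dot (a (inr ord0)) z.
    rewrite mxE /dot -sumrN; apply: eq_bigr => j _.
    by rewrite !mxE /= mulNr opprK.
  have h2 : delta <= (c^T *m w) 0 0.
    by apply: bound => i; rewrite Mw; exact: sol (inl i).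
  by move: h2 (sol (inr ord0)); rewrite cw /= => h2 h; lra.
pose lambda := y (inr ord0); pose yk := \col_i y (inl i).
have yk0 i : 0 <= yk i 0 by rewrite mxE.
have Myk : M^T *m yk = lambda *: c.
  apply/matrixP => j i; rewrite (ord1 i) !mxE.
  have /eqP := ya j; rewrite /dot big_sumType big_ord1 /= addr_eq0 mulrN opprK.
  by move=> /eqP <-; apply: eq_bigr => i' _; rewrite !mxE mulrC.
have yrhs : dot y rhs = (d^T *m yk) 0 0 - lambda * delta.
  rewrite /dot big_sumType big_ord1 /= mulrN mxE; congr (_ - _).
  by apply: eq_bigr => i _; rewrite !mxE mulrC.
have lambda_gt0 : 0 < lambda.
  rewrite lt_neqAle y0 andbT; apply/eqP => lambda0.
  have nostrict : [exists J, (0 < y J) && ~~ nonstrict J] = false.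
    apply/existsP => -[[i|o] /andP[yJ ns]] //.
    by move: yJ; rewrite (ord1 o) -/lambda -lambda0 ltxx.
  move: yd; rewrite nostrict lteifF yrhs -lambda0 mul0r subr0.
  have := dotmx_le yk0 feasible.
  by rewrite trmx_mul -mulmxA Myk -lambda0 scale0r mulmx0 !mxE; lra.
exists (lambda^-1 *: yk) => [i|]; first by rewrite !mxE mulr_ge0 // invr_ge0 ltW.
split; first by rewrite -scalemxAr Myk scalerA mulVf ?scale1r // gt_eqF.
have := lteifW yd; rewrite yrhs subr_ge0 => bd.
by rewrite -scalemxAr mxE ler_pdivlMl.
Qed.

End AffineFarkas.

Lemma dotmx_col_mxN (R : comRingType) n (mu x x' : 'cV[R]_n) :
  ((col_mx mu (- mu))^T *m col_mx x x') 0 0 =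
  \sum_(i < n) mu i 0 * x i 0 - \sum_(i < n) mu i 0 * x' i 0.
Proof.
rewrite tr_col_mx mul_row_col linearN /= mulNmx !mxE.
by congr (_ - _); apply: eq_bigr => i _; rewrite mxE.
Qed.

Lemma cv_le0 k (y : 'cV[rat]_k) : cv_le 0 y <-> forall i, 0 <= y i 0.
Proof. by split=> y0 i; have := y0 i; rewrite mxE. Qed.

Lemma cv_le_col_mx k l (u u' : 'cV[rat]_k) (v v' : 'cV[rat]_l) :
  cv_le (col_mx u v) (col_mx u' v') <-> cv_le u u' /\ cv_le v v'.
Proof.
split=> [uv|[uu vv] i].
  by split=> i; [have := uv (lshift l i) | have := uv (rshift k i)];
    rewrite ?col_mxEu ?col_mxEd.
by rewrite -(splitK i); case: (split i) => j /=; rewrite ?col_mxEu ?col_mxEd.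
Qed.

Theorem theorem1 (n m : nat) (A : 'M[int]_(m, n + n)) (b : 'cV[int]_m) :
  (0 < n)%N -> (0 < m)%N ->
  (exists x x' : 'cV[rat]_n, cv_le 0 x /\ cv_le 0 x' /\ sat_c A b x x') ->
  forall mu : 'cV[rat]_n, plrf A b mu <-> svg A b mu.
Proof.
move=> _ _ [x0 [x0' [x00 [x0'0 sat0]]]] mu; split.
- case=> mu0 plrf_mu; split=> //.
  pose M := col_mx (ratM A) (1%:M : 'M[rat]_(n + n)).
  pose d := col_mx (ratM b) (0 : 'cV[rat]_(n + n)).
  have sysE x x' : cv_le d (M *m col_mx x x') <->
                   [/\ sat_c A b x x', cv_le 0 x & cv_le 0 x'].
    rewrite mul_col_mx mul1mx cv_le_col_mx.
    rewrite -[0 : 'cV_(n + n)]col_mx0 cv_le_col_mx.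
    by split=> [[? []]|[? ? ?]].
  have [|w|y y0 [My yb]] :=
    affine_farkas (M := M) (d := d) (c := col_mx mu (- mu)) (delta := 1).
  + by exists (col_mx x0 x0'); apply/sysE.
  + rewrite -[w]vsubmxK => /sysE[sat x_ge0 x'_ge0].
    by rewrite dotmx_col_mxN; apply: plrf_mu.
  rewrite -[y]vsubmxK in y0 My yb.
  rewrite tr_col_mx trmx1 mul_row_col mul1mx in My.
  rewrite tr_col_mx mul_row_col trmx0 mul0mx addr0 in yb.
  move/cv_le0: y0; rewrite -col_mx0 cv_le_col_mx => -[y1_ge0 y2_ge0].
  exists (usubmx y); split=> //; split=> // j.
  by rewrite -My [in X in _ <= X]mxE lerDl; have := y2_ge0 j; rewrite mxE.
- case=> mu0 [y [y_ge0 [Ay by1]]]; split=> // x x' x_ge0 x'_ge0 sat.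
  rewrite -dotmx_col_mxN; apply: le_trans by1 _.
  apply: weak_duality => //; first exact/cv_le0.
  by apply/cv_le0; rewrite -col_mx0; apply/cv_le_col_mx.
Qed.
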